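(* Let $\hat q$ be an $n\times n$ and $\hat p$ an $m\times m$ parametric matrix and let $M$ be an $n\times m$ $(\hat q,\hat p)$-Manin matrix over $\mathfrak R$. Then for every $k\ge1$ the following identities hold in $\mathrm{Hom}((\mathbb C^m)^{\otimes k},(\mathbb C^n)^{\otimes k})\otimes\mathfrak R$: $$A_{\hat q}^{(k)}M_1\cdots M_k=A_{\hat q}^{(k)}M_1\cdots M_kA_{\hat p}^{(k)},\qquad M_1\cdots M_kS_{\hat p}^{(k)}=S_{\hat q}^{(k)}M_1\cdots M_kS_{\hat p}^{(k)}.$$
   Context: $\mathfrak R$ is an associative unital algebra over $\mathbb C$. A parametric $n\times n$ matrix is a matrix $\hat q=(q_{ij})$ of nonzero complex numbers with $q_{ij}q_{ji}=1$, $q_{ii}=1$. An $n\times m$ matrix $M$ over $\mathfrak R$ is a $(\hat q,\hat p)$-Manin matrix if $M_{ik}M_{jk}=q_{ji}M_{jk}M_{ik}$ for $1\le i<j\le n$, $1\le k\le m$, and $M_{ik}M_{jl}-q_{ji}p_{kl}M_{jl}M_{ik}+p_{kl}M_{il}M_{jk}-q_{ji}M_{jk}M_{il}=0$ for $i<j$, $k<l$. Let $E_{ij}$ be matrix units and $P_{\hat q}=\sum_{i,j=1}^nq_{ji}E_{ij}\otimes E_{ji}\in\mathrm{End}(\mathbb C^n\otimes\mathbb C^n)$ (so $P_{\hat q}^2=1$). The assignment $s_i=(i,i+1)\mapsto P_{\hat q}^{(i,i+1)}$ ($P_{\hat q}$ acting on tensor factors $i,i+1$ of $(\mathbb C^n)^{\otimes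 k}$) defines an action of $S_k$; write $P_{\hat q}^{\sigma}$ for the image of $\sigma\in S_k$. Set $S_{\hat q}^{(k)}=\frac1{k!}\sum_{\sigma\in S_k}P_{\hat q}^{\sigma}$ and $A_{\hat q}^{(k)}=\frac1{k!}\sum_{\sigma\in S_k}\mathrm{sgn}(\sigma)P_{\hat q}^{\sigma}$; similarly for $\hat p$ on $(\mathbb C^m)^{\otimes k}$. $M_a$ denotes $M$ acting on the $a$-th tensor factor, i.e. $1^{\otimes(a-1)}\otimes M\otimes1^{\otimes(k-a)}\in\mathrm{Hom}((\mathbb C^m)^{\otimes k},(\mathbb C^n)^{\otimes k})\otimes\mathfrak R$. *)

From mathcomp Require Import all_boot all_algebra all_fingroup complex.
From mathcomp Require Import Rstruct.
Set Implicit Arguments.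
Unset Strict Implicit.
Unset Printing Implicit Defensive.
Import GRing.Theory.
Local Open Scope ring_scope.

Definition CC : numClosedFieldType := (Rdefinitions.R)[i].

Definition parametric (n : nat) (q : 'M[CC]_n) : Prop :=
  (forall i j, q i j != 0) /\ (forall i j, q i j * q j i = 1) /\ (forall i, q i i = 1).

Definition manin (Ralg : algType CC) (n m : nat) (q : 'M[CC]_n) (p : 'M[CC]_m)
  (M : 'I_n -> 'I_m -> Ralg) : Prop :=
  (forall (i j : 'I_n) (k : 'I_m), (i < j)%N ->
      M i k * M j k = q j i *: (M j k * M i k)) /\
  (forall (i j : 'I_n) (k l : 'I_m), (i < j)%N -> (k < l)%N ->
      M i k * M j l - (q j i * p k l) *: (M j l * M i k)
      + p k l *: (M i l * M j k) - q j i *: (M j k * M i l) = 0).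

(* Multi-indices of the basis of (C^n)^{(x)k}: functions 'I_k -> 'I_n. *)
Definition tidx (n k : nat) := {ffun 'I_k -> 'I_n}.

(* Elements of Hom((C^m)^{(x)k},(C^n)^{(x)k}) (x) A, as arrays of entries in A
   (row multi-index in (C^n)^{(x)k}, column multi-index in (C^m)^{(x)k}). *)
Definition tmat (A : Type) (T1 T2 : Type) := T1 -> T2 -> A.

Definition tmul (A : pzSemiRingType) (T1 T2 T3 : finType)
  (X : tmat A T1 T2) (Y : tmat A T2 T3) : tmat A T1 T3 :=
  fun i l => \sum_(j : T2) X i j * Y j l.

Definition tid (A : pzSemiRingType) (T : finType) : tmat A T T :=
  fun i j => (i == j)%:R.

(* embedding of a C-valued operator into Hom (x) A, X |-> X (x) 1 *)
Definition tlift (Ralg : algType CC) (T1 T2 : Type) (X : tmat CC T1 T2)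
  : tmat Ralg T1 T2 := fun i j => (X i j)%:A.

Definition Eunit (n : nat) (i j x c : 'I_n) : CC := ((x == i) && (c == j))%:R.

(* P_q = sum_{i,j} q_{ji} E_ij (x) E_ji, entry ((x,y),(c,d)) *)
Definition Pq (n : nat) (q : 'M[CC]_n) (x y c d : 'I_n) : CC :=
  \sum_(i < n) \sum_(j < n) q j i * (Eunit i j x c * Eunit j i y d).

Definition Pq_at (n k : nat) (q : 'M[CC]_n) (a b : 'I_k) : tmat CC (tidx n k) (tidx n k) :=
  fun I J => Pq q (I a) (I b) (J a) (J b) *
             \prod_(c : 'I_k | (c != a) && (c != b)) ((I c == J c)%:R : CC).

Definition is_Pq_action (n k : nat) (q : 'M[CC]_n)
  (rho : {perm 'I_k} -> tmat CC (tidx n k) (tidx n k)) : Prop :=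
  (forall I J, rho 1%g I J = ((I == J)%:R : CC)) /\
  (forall s t I J, rho (s * t)%g I J = tmul (rho s) (rho t) I J) /\
  (forall (a b : 'I_k), val b = (val a).+1 -> forall I J, rho (tperm a b) I J = Pq_at q a b I J).

Definition Symm (n k : nat) (rho : {perm 'I_k} -> tmat CC (tidx n k) (tidx n k))
  : tmat CC (tidx n k) (tidx n k) :=
  fun I J => (k`!%:R)^-1 * \sum_(s : {perm 'I_k}) rho s I J.

Definition Antisymm (n k : nat) (rho : {perm 'I_k} -> tmat CC (tidx n k) (tidx n k))
  : tmat CC (tidx n k) (tidx n k) :=
  fun I J => (k`!%:R)^-1 * \sum_(s : {perm 'I_k}) (-1) ^+ (odd_perm s) * rho s I J.

(* M_1 M_2 ... M_k : its (I,J) entry is M_{I1 J1} M_{I2 J2} ... M_{Ik Jk}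
   (product in A taken in the order 1,...,k). *)
Definition Mprod (Ralg : algType CC) (n m k : nat) (M : 'I_n -> 'I_m -> Ralg)
  : tmat Ralg (tidx n k) (tidx m k) :=
  fun I J => \prod_(a < k) M (I a) (J a).

From mathcomp Require Import all_boot all_algebra all_fingroup complex.
From mathcomp Require Import Rstruct.
Import GRing.Theory Num.Theory.
Local Open Scope ring_scope.
Set Implicit Arguments. Unset Strict Implicit. Unset Printing Implicit Defensive.

(** The Manin relations, extended to all quadruples of indices, say that
  (1 - P_q^(a,a+1)) M_1 ... M_k (1 + P_p^(a,a+1)) = 0 for each pair of adjacent
  factors.  Since A_q P_q^(a,a+1) = -A_q, this gives
  A_q M_1 ... M_k P_p^(a,a+1) = -A_q M_1 ... M_k; adjacent transpositions generate
  S_k, so A_q M_1 ... M_k P_p^sigma = sgn(sigma) A_q M_1 ... M_k, and averaging over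
  sigma yields the first identity.  Dually, P_p^(a,a+1) S_p = S_p makes
  M_1 ... M_k S_p one half of M_1 ... M_k (1 + P_p^(a,a+1)) S_p, which is fixed by
  P_q^(a,a+1); hence P_q^sigma M_1 ... M_k S_p = M_1 ... M_k S_p for all sigma, and
  averaging yields the second identity. *)

Lemma perm_ind_adjacent (k : nat) (P : {perm 'I_k} -> Prop) :
  P 1%g -> (forall s t, P s -> P t -> P (s * t)%g) ->
  (forall a b : 'I_k, val b = (val a).+1 -> P (tperm a b)) ->
  forall s, P s.
Proof.
move=> Pone Pmul Padj.
have Pfar d (a c : 'I_k) : val c = (val a + d.+1)%N -> P (tperm a c).
  elim: d a c => [|d IH] a c hc; first by apply: (Padj); rewrite hc addn1.
  have lt_c'k : (val a + d.+1 < k)%N.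
    by apply: leq_trans (ltn_ord c); rewrite hc [(_ + d.+2)%N]addnS.
  pose c' := Ordinal lt_c'k.
  have c'c : val c = (val c').+1 by rewrite hc addnS.
  (* [tperm a c] is the conjugate of [tperm a c'] by the adjacent [tperm c' c] *)
  have -> : tperm a c = (tperm c' c * tperm a c' * tperm c' c)%g.
    have ac : a != c by rewrite -val_eqE hc ltn_eqF // addnS ltnS leq_addr.
    have ac' : a != c' by rewrite -val_eqE /= ltn_eqF // addnS ltnS leq_addr.
    have := tpermJ a c' (tperm c' c); rewrite tpermL tpermD 1?eq_sym // => <-.
    by rewrite /conjg tpermV mulgA.
  by apply: (Pmul); [apply: (Pmul)|]; [apply: (Padj)| apply: IH|apply: (Padj)].
have Ptperm (a c : 'I_k) : a != c -> P (tperm a c).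
  wlog lt_ac : a c / (val a < val c)%N => [W|_].
    case: (ltngtP (val a) (val c)) => [lt_ac|lt_ca|/val_inj->]; [exact: W | | by rewrite eqxx].
    by rewrite eq_sym tpermC; apply: W.
  by apply: (Pfar (val c - val a).-1); rewrite prednK ?subn_gt0 // subnKC // ltnW.
move=> s; case: (prod_tpermP s) => ts -> hts.
elim: ts hts => [|t ts IH] /=; first by rewrite big_nil.
by case/andP=> ht hts; rewrite big_cons; apply: (Pmul); [apply: Ptperm | apply: IH].
Qed.

Lemma prod_ord_adjacent (R : pzSemiRingType) k (F : 'I_k -> R) (a b : 'I_k) :
  val b = (val a).+1 ->
  \prod_(c < k) F c = \prod_(c < k | (c < a)%N) F c * (F a * F b) * \prod_(c < k | (b < c)%N) F c.
Proof.
move=> hb; pose G c := F (insubd a c).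
have GE (c : 'I_k) : G c = F c by congr F; apply/val_inj; rewrite val_insubd ltn_ord.
have FG (P : pred nat) : \prod_(c < k | P c) F c = \prod_(c < k | P c) G c.
  by apply: eq_bigr => c _; rewrite GE.
have lt_a1k : (a.+1 < k)%N by rewrite -hb ltn_ord.
have -> : \prod_(c < k | (c < a)%N) F c = \prod_(0 <= c < a) G c.
  by rewrite (FG (fun c => c < a)%N) big_mkord (big_ord_widen_cond k xpredT G (ltnW (ltn_ord a))).
have -> : \prod_(c < k | (b < c)%N) F c = \prod_(a.+2 <= c < k) G c.
  by rewrite (FG (fun c => b < c)%N) big_geq_mkord hb.
rewrite (FG xpredT) -(GE a) -(GE b) hb -(big_mkord xpredT).
rewrite (big_cat_nat (n := a)) ?(ltnW (ltn_ord a)) // (big_ltn (ltn_ord a)) (big_ltn lt_a1k).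
by rewrite /= !mulrA.
Qed.

Lemma ord_succ_neq k (a b : 'I_k) : val b = (val a).+1 -> a != b.
Proof. by move=> hb; rewrite -(inj_eq val_inj) hb neq_ltn ltnSn. Qed.

Lemma sum_delta_l (R : pzSemiRingType) (T : finType) (F : T -> R) x0 :
  \sum_x (x == x0)%:R * F x = F x0.
Proof.
rewrite (bigD1 x0) //= eqxx mul1r big1 ?addr0 // => x /negbTE ->; exact: mul0r.
Qed.

Lemma sum_delta_r (R : pzSemiRingType) (T : finType) (F : T -> R) x0 :
  \sum_x F x * (x == x0)%:R = F x0.
Proof.
rewrite (bigD1 x0) //= eqxx mulr1 big1 ?addr0 // => x /negbTE ->; exact: mulr0.
Qed.

Lemma fact_inv_sum_perm_const (F : numFieldType) (V : lmodType F) k (v : V) :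
  (k`!%:R : F)^-1 *: \sum_(s : {perm 'I_k}) v = v.
Proof.
rewrite sumr_const card_Sn -scaler_nat scalerA mulVf ?scale1r //.
by rewrite pnatr_eq0 -lt0n fact_gt0.
Qed.

Lemma mulr2n_inj (F : numFieldType) (V : lmodType F) (v w : V) : v *+ 2 = w *+ 2 -> v = w.
Proof.
move=> /(congr1 (fun x => (2%:R : F)^-1 *: x)).
by rewrite -!scaler_nat !scalerA mulVf ?pnatr_eq0 // !scale1r.
Qed.

Lemma tmulA (R : pzSemiRingType) (T1 T2 T3 T4 : finType)
  (X : tmat R T1 T2) (Y : tmat R T2 T3) (Z : tmat R T3 T4) i l :
  tmul (tmul X Y) Z i l = tmul X (tmul Y Z) i l.
Proof.
rewrite /tmul; under eq_bigr do rewrite mulr_suml.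
rewrite exchange_big; apply: eq_bigr => j _; rewrite mulr_sumr.
by apply: eq_bigr => h _; rewrite mulrA.
Qed.

Lemma eq_tmull (R : pzSemiRingType) (T1 T2 T3 : finType)
  (X X' : tmat R T1 T2) (Y : tmat R T2 T3) :
  (forall i j, X i j = X' i j) -> forall i l, tmul X Y i l = tmul X' Y i l.
Proof. by move=> eqX i l; apply: eq_bigr => j _; rewrite eqX. Qed.

Lemma eq_tmulr (R : pzSemiRingType) (T1 T2 T3 : finType)
  (X : tmat R T1 T2) (Y Y' : tmat R T2 T3) :
  (forall j l, Y j l = Y' j l) -> forall i l, tmul X Y i l = tmul X Y' i l.
Proof. by move=> eqY i l; apply: eq_bigr => j _; rewrite eqY. Qed.

Lemma tmulZl (Ralg : algType CC) (T1 T2 T3 : finType) (c : CC)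
  (X : tmat Ralg T1 T2) (Y : tmat Ralg T2 T3) i l :
  tmul (fun i j => c *: X i j) Y i l = c *: tmul X Y i l.
Proof. by rewrite /tmul scaler_sumr; apply: eq_bigr => j _; rewrite scalerAl. Qed.

Lemma tlift_tmul (Ralg : algType CC) (T1 T2 T3 : finType)
  (X : tmat CC T1 T2) (Y : tmat CC T2 T3) i j :
  tlift Ralg (tmul X Y) i j = tmul (tlift Ralg X) (tlift Ralg Y) i j.
Proof.
rewrite /tlift /tmul scaler_suml; apply: eq_bigr => l _.
by rewrite mulr_algl scalerA.
Qed.

Definition tswap (n k : nat) (a b : 'I_k) (I : tidx n k) : tidx n k :=
  [ffun c => I (tperm a b c)].

Lemma tswapK n k (a b : 'I_k) : involutive (@tswap n k a b).
Proof. by move=> I; apply/ffunP => c; rewrite !ffunE tpermK. Qed.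

Lemma eq_tswap n k (a b : 'I_k) (I J : tidx n k) : (J == tswap a b I) = (I == tswap a b J).
Proof. by apply/eqP/eqP => ->; rewrite tswapK. Qed.

Lemma tswapL n k (a b : 'I_k) (I : tidx n k) : tswap a b I a = I b.
Proof. by rewrite ffunE tpermL. Qed.

Lemma tswapR n k (a b : 'I_k) (I : tidx n k) : tswap a b I b = I a.
Proof. by rewrite ffunE tpermR. Qed.

Lemma tswapD n k (a b c : 'I_k) (I : tidx n k) : c != a -> c != b -> tswap a b I c = I c.
Proof. by move=> ca cb; rewrite ffunE tpermD // eq_sym. Qed.

Lemma PqE n (q : 'M[CC]_n) x y c d : Pq q x y c d = q y x * ((c == y) && (d == x))%:R.
Proof.
rewrite /Pq (bigD1 x) //= [X in _ + X]big1 => [|i]; last first.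
  by rewrite eq_sym => /negbTE ne; apply: big1 => j _; rewrite /Eunit ne mul0r mulr0.
rewrite addr0 (bigD1 y) //= [X in _ + X]big1 => [|j]; last first.
  by rewrite eq_sym => /negbTE ne; rewrite /Eunit ne !mulr0.
by rewrite addr0 /Eunit !eqxx -natrM mulnb.
Qed.

Lemma prodr_nat_bool (T : finType) (P E : pred T) :
  \prod_(c | P c) ((E c)%:R : CC) = ([forall c, P c ==> E c])%:R.
Proof.
case: forallP => [PE|/forallP/forallPn[c]]; first by apply: big1 => c /(implyP (PE c)) ->.
by rewrite negb_imply => /andP[Pc /negbTE Ec]; rewrite (bigD1 c) //= Ec mul0r.
Qed.

Lemma Pq_atE n k (q : 'M[CC]_n) (a b : 'I_k) (I J : tidx n k) : a != b ->
  Pq_at q a b I J = q (I b) (I a) * (J == tswap a b I)%:R.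
Proof.
move=> ab; rewrite /Pq_at PqE prodr_nat_bool -mulrA -natrM mulnb; congr (_ * (nat_of_bool _)%:R).
apply/idP/eqP => [/andP[/andP[/eqP Ja /eqP Jb] /forallP JI]|->].
  apply/ffunP => c; rewrite ffunE.
  have [->|ca] := eqVneq c a; first by rewrite tpermL.
  have [->|cb] := eqVneq c b; first by rewrite tpermR.
  by rewrite tpermD 1?eq_sym //; move: (JI c); rewrite ca cb => /eqP.
rewrite tswapL tswapR !eqxx; apply/forallP => c.
by apply/implyP => /andP[ca cb]; rewrite tswapD.
Qed.

Section PqProducts.
Variables (Ralg : algType CC) (n k : nat) (q : 'M[CC]_n) (a b : 'I_k).
Hypothesis ab : a != b.

Lemma tmul_Pq_at (T : finType) (Y : tmat CC T (tidx n k)) I J :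
  tmul Y (Pq_at q a b) I J = Y I (tswap a b J) * q (J a) (J b).
Proof.
rewrite /tmul; under eq_bigr do rewrite Pq_atE // eq_tswap mulrCA mulrA.
by rewrite sum_delta_r tswapL tswapR mulrC.
Qed.

Lemma Pq_at_tmul (T : finType) (Y : tmat CC (tidx n k) T) I J :
  tmul (Pq_at q a b) Y I J = q (I b) (I a) * Y (tswap a b I) J.
Proof.
rewrite /tmul; under eq_bigr do rewrite Pq_atE // -mulrA.
by rewrite -mulr_sumr sum_delta_l.
Qed.

Lemma tmul_lift_Pq_at (T : finType) (Y : tmat Ralg T (tidx n k)) I J :
  tmul Y (tlift Ralg (Pq_at q a b)) I J = q (J a) (J b) *: Y I (tswap a b J).
Proof.
rewrite /tmul /tlift.
under eq_bigr do rewrite Pq_atE // eq_tswap -scalerA scaler_nat -scalerAr scalerAl.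
by rewrite sum_delta_r tswapL tswapR.
Qed.

Lemma lift_Pq_at_tmul (T : finType) (Y : tmat Ralg (tidx n k) T) I J :
  tmul (tlift Ralg (Pq_at q a b)) Y I J = q (I b) (I a) *: Y (tswap a b I) J.
Proof.
rewrite /tmul /tlift; under eq_bigr do rewrite Pq_atE // -scalerA scaler_nat -scalerAl.
by rewrite -scaler_sumr sum_delta_l.
Qed.

End PqProducts.

Section ManinDefect.
Variables (Ralg : algType CC) (n m : nat) (q : 'M[CC]_n) (p : 'M[CC]_m).
Variable M : 'I_n -> 'I_m -> Ralg.
Hypotheses (hq : parametric q) (hp : parametric p) (hM : manin q p M).

Definition manin_defect i j k l := M i k * M j l - (q j i * p k l) *: (M j l * M i k)
  + p k l *: (M i l * M j k) - q j i *: (M j k * M i l).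

Lemma manin_defect_swapc i j k l : manin_defect i j k l = p k l *: manin_defect i j l k.
Proof.
have [_ [pK _]] := hp.
rewrite /manin_defect !scalerDr !scalerN !scalerA mulrCA pK mulr1 scale1r.
by rewrite [p k l * _]mulrC -addrA addrC !addrA.
Qed.

Lemma manin_defect_swap i j k l :
  manin_defect i j k l = - (q j i * p k l) *: manin_defect j i l k.
Proof.
have [_ [pK _]] := hp; have [_ [qK _]] := hq.
rewrite /manin_defect !scalerDr !scalerN !scaleNr !opprK !scalerA.
rewrite mulrACA pK qK mulr1 scale1r -mulrA pK mulr1 mulrAC qK mul1r.
by rewrite (addrC (M i k * _)) -(addrA _ (_ *: _)) (addrC (_ *: _) (- _)) addrA.
Qed.

Lemma manin_defect_eq0 i j k l : manin_defect i j k l = 0.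
Proof.
have [hcol hcross] := hM; have [_ [_ p1]] := hp; have [_ [_ q1]] := hq.
wlog lt_ij : i j k l / (i < j)%N => [W|].
  case: (ltngtP i j) => [/W //|/W lt_ji|/val_inj eq_ij].
    by rewrite manin_defect_swap lt_ji scaler0.
  by rewrite /manin_defect eq_ij q1 mul1r scale1r subrK subrr.
case: (ltngtP k l) => [|lt_lk|/val_inj eq_kl]; first exact: hcross.
  by rewrite manin_defect_swapc /manin_defect hcross ?scaler0.
by rewrite /manin_defect eq_kl p1 mulr1 !scale1r hcol // subrr add0r subrr.
Qed.

End ManinDefect.

Section AdjacentManin.
Variables (Ralg : algType CC) (n m : nat) (q : 'M[CC]_n) (p : 'M[CC]_m).
Variable M : 'I_n -> 'I_m -> Ralg.
Hypotheses (hq : parametric q) (hp : parametric p) (hM : manin q p M).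
Variables (k : nat) (a b : 'I_k).
Hypothesis hb : val b = (val a).+1.

Local Notation X := (@Mprod Ralg n m k M).

(* Entrywise form of (1 - P_q^(a,a+1)) M_1 ... M_k (1 + P_p^(a,a+1)) = 0. *)
Lemma Mprod_manin_adjacent I J :
  X I J + p (J a) (J b) *: X I (tswap a b J) =
  q (I b) (I a) *: (X (tswap a b I) J + p (J a) (J b) *: X (tswap a b I) (tswap a b J)).
Proof.
have away (c : 'I_k) : (c < a)%N || (b < c)%N -> c != a /\ c != b.
  rewrite -!(inj_eq val_inj) => /orP[lt_ca|lt_bc].
    by rewrite !ltn_eqF // hb ltnS ltnW.
  by rewrite !gtn_eqF // -ltnS -hb ltnW.
pose L := \prod_(c < k | (c < a)%N) M (I c) (J c).
pose R := \prod_(c < k | (b < c)%N) M (I c) (J c).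
have split (I' : tidx n k) (J' : tidx m k) :
    (forall c : 'I_k, (c < a)%N || (b < c)%N -> I' c = I c /\ J' c = J c) ->
    X I' J' = L * (M (I' a) (J' a) * M (I' b) (J' b)) * R.
  move=> agree; rewrite /Mprod (prod_ord_adjacent _ hb).
  by congr (_ * _ * _); apply: eq_bigr => c hc; case: (agree c) => [|-> ->] //; rewrite hc ?orbT.
have agreeI (c : 'I_k) : (c < a)%N || (b < c)%N -> tswap a b I c = I c /\ J c = J c.
  by move=> /away[ca cb]; rewrite tswapD.
have agreeJ (c : 'I_k) : (c < a)%N || (b < c)%N -> I c = I c /\ tswap a b J c = J c.
  by move=> /away[ca cb]; rewrite tswapD.
have agreeIJ (c : 'I_k) : (c < a)%N || (b < c)%N -> tswap a b I c = I c /\ tswap a b J c = J c.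
  by move=> /away[ca cb]; rewrite !tswapD.
rewrite (split I J) // (split _ _ agreeI) (split _ _ agreeJ) (split _ _ agreeIJ).
rewrite !tswapL !tswapR.
have := congr1 (fun x => L * x * R) (manin_defect_eq0 hq hp hM (I a) (I b) (J a) (J b)).
rewrite /= mulr0 mul0r /manin_defect !(mulrDr, mulrDl, mulrN, mulNr) -!scalerAr -!scalerAl.
move=> defect0; apply/eqP; rewrite -subr_eq0 -{}[X in _ == X]defect0 scalerDr scalerA opprD addrA.
by apply/eqP; rewrite -!addrA; congr (_ + _); rewrite [RHS]addrCA [- _ + - _]addrC.
Qed.

End AdjacentManin.

Section PqAction.
Variables (n k : nat) (q : 'M[CC]_n) (rho : {perm 'I_k} -> tmat CC (tidx n k) (tidx n k)).
Hypothesis hrho : is_Pq_action q rho.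

Lemma Antisymm_mul_rho t I L :
  tmul (Antisymm rho) (rho t) I L = (-1) ^+ odd_perm t * Antisymm rho I L.
Proof.
have [_ [rhoM _]] := hrho.
rewrite /tmul /Antisymm; under eq_bigr do rewrite -mulrA mulr_suml.
rewrite -mulr_sumr exchange_big /= mulrCA; congr (_ * _).
rewrite [in RHS](reindex_inj (mulIg t)) mulr_sumr; apply: eq_bigr => s _.
rewrite rhoM /tmul !mulr_sumr; apply: eq_bigr => K _.
rewrite odd_permM signr_addb !mulrA; congr (_ * _ * _).
by rewrite mulrAC -expr2 sqrr_sign mul1r.
Qed.

Lemma rho_mul_Symm t I L : tmul (rho t) (Symm rho) I L = Symm rho I L.
Proof.
have [_ [rhoM _]] := hrho.
rewrite /tmul /Symm; under eq_bigr do rewrite mulrCA mulr_sumr.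
rewrite -mulr_sumr exchange_big /=; congr (_ * _).
by rewrite [in RHS](reindex_inj (mulgI t)); apply: eq_bigr => s _; rewrite rhoM.
Qed.

Section Adjacent.
Variables (a b : 'I_k).
Hypothesis hb : val b = (val a).+1.

Lemma Antisymm_tswap I K : Antisymm rho I (tswap a b K) * q (K a) (K b) = - Antisymm rho I K.
Proof.
have [_ [_ rho_adj]] := hrho; have ab := ord_succ_neq hb.
have := Antisymm_mul_rho (tperm a b) I K; rewrite odd_tperm ab expr1 mulN1r => <-.
rewrite -tmul_Pq_at //.
by apply: eq_bigr => L _; rewrite rho_adj.
Qed.

Lemma Symm_tswap L J : Symm rho L J = q (L b) (L a) * Symm rho (tswap a b L) J.
Proof.
have [_ [_ rho_adj]] := hrho; have ab := ord_succ_neq hb.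
rewrite -Pq_at_tmul // -(rho_mul_Symm (tperm a b)).
by apply: eq_bigr => K _; rewrite rho_adj.
Qed.

End Adjacent.
End PqAction.

Section Absorption.
Variables (Ralg : algType CC) (n k : nat) (q : 'M[CC]_n).
Variable rho : {perm 'I_k} -> tmat CC (tidx n k) (tidx n k).
Hypothesis hrho : is_Pq_action q rho.

Lemma lift_rho_sign_r (T : finType) (Y : tmat Ralg T (tidx n k)) :
  (forall a b : 'I_k, val b = (val a).+1 ->
     forall I J, tmul Y (tlift Ralg (Pq_at q a b)) I J = - Y I J) ->
  forall s I J, tmul Y (tlift Ralg (rho s)) I J = (-1) ^+ odd_perm s *: Y I J.
Proof.
have [rho1 [rhoM rho_adj]] := hrho; move=> Y_adj.
apply: perm_ind_adjacent => [I J|s t IHs IHt I J|a b hb I J].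
- rewrite odd_perm1 scale1r /tmul /tlift; under eq_bigr do rewrite rho1 scaler_nat.
  exact: sum_delta_r.
- rewrite odd_permM signr_addb -scalerA -IHt -tmulZl -(eq_tmull _ IHs) tmulA.
  by apply: eq_tmulr => L K; rewrite -tlift_tmul /tlift rhoM.
- rewrite odd_tperm ord_succ_neq // scaleN1r -(Y_adj a b hb).
  by apply: eq_bigr => L _; rewrite /tlift rho_adj.
Qed.

Lemma lift_rho_fix_l (T : finType) (Y : tmat Ralg (tidx n k) T) :
  (forall a b : 'I_k, val b = (val a).+1 ->
     forall I J, tmul (tlift Ralg (Pq_at q a b)) Y I J = Y I J) ->
  forall s I J, tmul (tlift Ralg (rho s)) Y I J = Y I J.
Proof.
have [rho1 [rhoM rho_adj]] := hrho; move=> Y_adj.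
apply: perm_ind_adjacent => [I J|s t IHs IHt I J|a b hb I J].
- rewrite /tmul /tlift; under eq_bigr do rewrite rho1 scaler_nat eq_sym.
  exact: sum_delta_l.
- rewrite -[RHS]IHs -[in RHS](eq_tmulr _ IHt) -tmulA.
  by apply: eq_tmull => L K; rewrite -tlift_tmul /tlift rhoM.
- rewrite -[RHS](Y_adj a b hb).
  by apply: eq_bigr => L _; rewrite /tlift rho_adj.
Qed.

Lemma tmul_lift_Antisymm (T : finType) (Y : tmat Ralg T (tidx n k)) I J :
  (forall s I J, tmul Y (tlift Ralg (rho s)) I J = (-1) ^+ odd_perm s *: Y I J) ->
  tmul Y (tlift Ralg (Antisymm rho)) I J = Y I J.
Proof.
move=> Y_sign; rewrite -[RHS](@fact_inv_sum_perm_const _ _ k) /tmul /tlift.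
under eq_bigr do rewrite -scalerA scaler_suml -scalerAr mulr_sumr.
rewrite -scaler_sumr exchange_big /=; congr (_ *: _); apply: eq_bigr => s _.
transitivity ((-1) ^+ odd_perm s *: tmul Y (tlift Ralg (rho s)) I J).
  by rewrite scaler_sumr; apply: eq_bigr => L _; rewrite scalerAr scalerA.
by rewrite Y_sign scalerA -expr2 sqrr_sign scale1r.
Qed.

Lemma lift_Symm_tmul (T : finType) (Y : tmat Ralg (tidx n k) T) I J :
  (forall s I J, tmul (tlift Ralg (rho s)) Y I J = Y I J) ->
  tmul (tlift Ralg (Symm rho)) Y I J = Y I J.
Proof.
move=> Y_fix; rewrite -[RHS](@fact_inv_sum_perm_const _ _ k) /tmul /tlift.
under eq_bigr do rewrite -scalerA scaler_suml -scalerAl mulr_suml.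
rewrite -scaler_sumr exchange_big /=; congr (_ *: _); apply: eq_bigr => s _.
by rewrite -(Y_fix s).
Qed.

End Absorption.

Section ManinProducts.
Variables (Ralg : algType CC) (n m : nat) (q : 'M[CC]_n) (p : 'M[CC]_m).
Variable M : 'I_n -> 'I_m -> Ralg.
Hypotheses (hq : parametric q) (hp : parametric p) (hM : manin q p M).
Variables (k : nat) (rhoq : {perm 'I_k} -> tmat CC (tidx n k) (tidx n k))
          (rhop : {perm 'I_k} -> tmat CC (tidx m k) (tidx m k)).
Hypotheses (hrq : is_Pq_action q rhoq) (hrp : is_Pq_action p rhop).
Variables (a b : 'I_k).
Hypothesis hb : val b = (val a).+1.

Local Notation X := (@Mprod Ralg n m k M).

Lemma Antisymm_Mprod_Pq_at I J :
  tmul (tmul (tlift Ralg (Antisymm rhoq)) X) (tlift Ralg (Pq_at p a b)) I J =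
  - tmul (tlift Ralg (Antisymm rhoq)) X I J.
Proof.
pose W K := X K J + p (J a) (J b) *: X K (tswap a b J).
rewrite tmul_lift_Pq_at ?ord_succ_neq //; apply/eqP; rewrite -addr_eq0 addrC; apply/eqP.
transitivity (\sum_K (Antisymm rhoq I K)%:A * W K).
  by rewrite /tmul scaler_sumr -big_split; apply: eq_bigr => K _; rewrite mulrDr scalerAr.
apply: mulr2n_inj; rewrite mul0rn mulr2n; apply/eqP; rewrite addr_eq0; apply/eqP.
rewrite [LHS](reindex_inj (can_inj (tswapK a b))) -sumrN.
apply: eq_bigr => K _; rewrite /W (Mprod_manin_adjacent hq hp hM hb) tswapK tswapL tswapR.
by rewrite -scalerAr scalerAl scalerA mulrC (Antisymm_tswap hrq hb) scaleNr mulNr.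
Qed.

Lemma Pq_at_Mprod_Symm I J :
  tmul (tlift Ralg (Pq_at q a b)) (tmul X (tlift Ralg (Symm rhop))) I J =
  tmul X (tlift Ralg (Symm rhop)) I J.
Proof.
pose W I := \sum_L (X I L + p (L a) (L b) *: X I (tswap a b L)) * (Symm rhop L J)%:A.
have WE I' : W I' = tmul X (tlift Ralg (Symm rhop)) I' J *+ 2.
  rewrite mulr2n /W /tmul /tlift; under eq_bigr do rewrite mulrDl.
  rewrite big_split /=; congr (_ + _).
  rewrite (reindex_inj (can_inj (tswapK a b))) /=; apply: eq_bigr => L _.
  rewrite tswapK tswapL tswapR [in RHS](Symm_tswap hrp hb L J).
  by rewrite -scalerA -[in RHS]scalerAr [in RHS]scalerAl.
have W_swap : W I = q (I b) (I a) *: W (tswap a b I).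
  rewrite /W scaler_sumr; apply: eq_bigr => L _.
  by rewrite (Mprod_manin_adjacent hq hp hM hb I L) scalerAl.
rewrite lift_Pq_at_tmul ?ord_succ_neq //; apply: mulr2n_inj.
by rewrite scalerMnr -!WE W_swap.
Qed.

End ManinProducts.

Theorem mainTheorem7 (Ralg : algType CC) (n m : nat)
  (q : 'M[CC]_n) (p : 'M[CC]_m) (M : 'I_n -> 'I_m -> Ralg) :
  parametric q -> parametric p -> manin q p M ->
  forall (k : nat), (1 <= k)%N ->
  forall (rhoq : {perm 'I_k} -> tmat CC (tidx n k) (tidx n k))
         (rhop : {perm 'I_k} -> tmat CC (tidx m k) (tidx m k)),
  is_Pq_action q rhoq -> is_Pq_action p rhop ->
  (forall I J,
     tmul (tlift Ralg (Antisymm rhoq)) (@Mprod Ralg n m k M) I J =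
     tmul (tmul (tlift Ralg (Antisymm rhoq)) (@Mprod Ralg n m k M)) (tlift Ralg (Antisymm rhop)) I J) /\
  (forall I J,
     tmul (@Mprod Ralg n m k M) (tlift Ralg (Symm rhop)) I J =
     tmul (tmul (tlift Ralg (Symm rhoq)) (@Mprod Ralg n m k M)) (tlift Ralg (Symm rhop)) I J).
Proof.
move=> hq hp hM k _ rhoq rhop hrq hrp; split => I J.
- symmetry; apply: tmul_lift_Antisymm; apply: (lift_rho_sign_r hrp) => a b hb.
  exact: (Antisymm_Mprod_Pq_at hq hp hM hrq hb).
- rewrite tmulA; symmetry; apply: lift_Symm_tmul; apply: (lift_rho_fix_l hrq) => a b hb.
  exact: (Pq_at_Mprod_Symm hq hp hM hrp hb).
Qed.
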